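(* Let $a,b,c,d>0$, $\mu\in(0,1]$, $u\ge0$, and consider on $\mathcal{I}=[0,1]^2$ the controlled system $$\dot x=x(1-x)\big[xr(-c+d-a+b)+x(a-b)-r(d+b)+b+u\big]+\mu(1-2x),\qquad \dot r=r(1-r)(2x-1).$$ If $u>(c+d)/2$, then on the side $\mathcal{B}_t=\{(x,1):x\in[0,1]\}$ there exists an equilibrium $(x_t^*,1)$ with $x_t^*\in(1/2,1)$, and all other equilibria on $\mathcal{B}_t$ (if any) lie in $\{(x,1):x\in(0,1/2)\}$. *)

From mathcomp Require Import all_boot all_order all_algebra.
From mathcomp Require Import reals.
Set Implicit Arguments. Unset Strict Implicit. Unset Printing Implicit Defensive.
Import Order.TTheory GRing.Theory Num.Theory.
Local Open Scope ring_scope.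

Definition xdot (R : realType) (a b c d mu u : R) (x r : R) : R :=
  x * (1 - x) * (x * r * (- c + d - a + b) + x * (a - b) - r * (d + b) + b + u)
  + mu * (1 - 2 * x).

Definition rdot (R : realType) (x r : R) : R := r * (1 - r) * (2 * x - 1).

Definition is_equilibrium (R : realType) (a b c d mu u : R) (x r : R) : Prop :=
  xdot a b c d mu u x r = 0 /\ rdot x r = 0.

From mathcomp Require Import all_boot all_order all_algebra.
From mathcomp Require Import reals.
From mathcomp Require Import ring lra.
Set Implicit Arguments. Unset Strict Implicit. Unset Printing Implicit Defensive.
Import Order.TTheory GRing.Theory Num.Theory.
Local Open Scope ring_scope.

(* On the side r = 1 the field is a cubic in x; centring it at s = x - 1/2 gives
   g s = (1/4 - s^2)(A + B s) - 2 mu s with A = u - (c+d)/2 > 0.  Since g 0 = A/4 > 0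
   and g (1/2) = -mu < 0, g has a root in (0, 1/2).  It is the only one there: for
   roots 0 < s < t < 1/2, t g(s) - s g(t) = (t - s)(A (1/4 - s t) + s t (A + B s)
   + s t (A + B t)), and every term is positive because A + B s = 2 mu s / (1/4 - s^2)
   at a root.  As g (-1/2) = mu, every other equilibrium with x in [0, 1] lies in
   (0, 1/2). *)

Definition centred_cubic (R : fieldType) (A B mu s : R) : R :=
  (1/4 - s ^+ 2) * (A + B * s) - 2 * mu * s.

Lemma xdot_top_side (R : realType) (a b c d mu u x : R) :
  xdot a b c d mu u x 1 = centred_cubic (u - (c + d) / 2) (d - c) mu (x - 1/2).
Proof. by rewrite /xdot /centred_cubic; field. Qed.

Lemma mul_lt_quarter (R : realFieldType) (s t : R) :
  0 <= s -> 0 <= t -> s < 1/2 -> t < 1/2 -> s * t < 1/4.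
Proof.
move=> s_ge0 t_ge0 s_lt t_lt.
by have := ltr_pM s_ge0 t_ge0 s_lt t_lt; lra.
Qed.

Section CentredCubic.

Variables (R : realFieldType) (A B mu : R).

Local Notation g := (centred_cubic A B mu).

Lemma centred_cubic_0 : g 0 = A / 4.
Proof. by rewrite /centred_cubic; field. Qed.

Lemma centred_cubic_half : g (1/2) = - mu.
Proof. by rewrite /centred_cubic; field. Qed.

Lemma centred_cubic_Nhalf : g (- (1/2)) = mu.
Proof. by rewrite /centred_cubic; field. Qed.

Lemma centred_cubic_root_factor_gt0 (s : R) :
  0 < mu -> 0 < s -> s < 1/2 -> g s = 0 -> 0 < A + B * s.
Proof.
rewrite /centred_cubic => mu_gt0 s_gt0 s_lt /subr0_eq gs0.
have : 0 < 1/4 - s ^+ 2.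
  by rewrite subr_gt0 expr2 mul_lt_quarter // ltW.
by move/pmulr_rgt0 <-; rewrite gs0 !mulr_gt0.
Qed.

Lemma centred_cubic_root_lt (s t : R) : 0 < A -> 0 < mu ->
  0 < s -> s < t -> t < 1/2 -> g s = 0 -> g t = 0 -> False.
Proof.
move=> A_gt0 mu_gt0 s_gt0 lt_st t_lt gs0 gt0.
have t_gt0 : 0 < t by apply: lt_trans lt_st.
have s_lt : s < 1/2 by apply: lt_trans t_lt.
have As := centred_cubic_root_factor_gt0 mu_gt0 s_gt0 s_lt gs0.
have At := centred_cubic_root_factor_gt0 mu_gt0 t_gt0 t_lt gt0.
have st_lt : s * t < 1/4 by apply: mul_lt_quarter; rewrite ?ltW.
have cross : t * g s - s * g t
    = (t - s) * (A * (1/4 - s * t) + s * t * (A + B * s) + s * t * (A + B * t)).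
  by rewrite /centred_cubic; field.
have pos : 0 < A * (1/4 - s * t) + s * t * (A + B * s) + s * t * (A + B * t).
  by rewrite !addr_gt0 ?mulr_gt0 // subr_gt0.
have ts_gt0 : 0 < t - s by rewrite subr_gt0.
have := mulr_gt0 ts_gt0 pos.
by rewrite -cross gs0 gt0 !mulr0 subrr ltxx.
Qed.

Lemma centred_cubic_root_unique (s t : R) : 0 < A -> 0 < mu ->
  0 < s -> s < 1/2 -> 0 < t -> t < 1/2 -> g s = 0 -> g t = 0 -> s = t.
Proof.
move=> A_gt0 mu_gt0 s_gt0 s_lt t_gt0 t_lt gs0 gt0.
have [lt_st|lt_ts|//] := ltgtP s t; exfalso.
- exact: (centred_cubic_root_lt A_gt0 mu_gt0 s_gt0 lt_st t_lt gs0 gt0).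
- exact: (centred_cubic_root_lt A_gt0 mu_gt0 t_gt0 lt_ts s_lt gt0 gs0).
Qed.

Lemma centred_cubic_root_gt0 (s : R) : 0 < A -> 0 < mu ->
  0 <= s -> s <= 1/2 -> g s = 0 -> 0 < s < 1/2.
Proof.
move=> A_gt0 mu_gt0 s_ge0 s_le gs0; apply/andP; split.
- rewrite lt_def s_ge0 andbT; apply: contra_eq_neq gs0 => ->.
  by rewrite centred_cubic_0 gt_eqF ?divr_gt0.
- rewrite lt_def s_le andbT; apply: contra_eq_neq gs0 => <-.
  by rewrite centred_cubic_half oppr_eq0 gt_eqF.
Qed.

End CentredCubic.

Lemma centred_cubic_exists_root (R : rcfType) (A B mu : R) :
  0 < A -> 0 < mu -> exists2 s, 0 < s < 1/2 & centred_cubic A B mu s = 0.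
Proof.
move=> A_gt0 mu_gt0.
pose p : {poly R} := (2 * mu) *: 'X - ((1/4)%:P - 'X ^+ 2) * (A%:P + B *: 'X).
have pE s : p.[s] = - centred_cubic A B mu s.
  by rewrite /p /centred_cubic !hornerE; ring.
have [s /andP[s_ge0 s_le] /rootP ps0] : exists2 s, 0 <= s <= 1/2 & root p s.
  apply: poly_ivt; first lra.
  by rewrite !pE centred_cubic_0 centred_cubic_half; apply/andP; split; lra.
have gs0 : centred_cubic A B mu s = 0 by apply/eqP; rewrite -oppr_eq0 -pE ps0.
by exists s => //; apply: centred_cubic_root_gt0 gs0.
Qed.

Theorem lemma18 (R : realType) (a b c d mu u : R)
  (ha : 0 < a) (hb : 0 < b) (hc : 0 < c) (hd : 0 < d)
  (hmu0 : 0 < mu) (hmu1 : mu <= 1) (hu0 : 0 <= u)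
  (hu : (c + d) / 2 < u) :
  exists xs : R,
    [/\ 1 / 2 < xs, xs < 1, is_equilibrium a b c d mu u xs 1 &
        forall x : R, 0 <= x -> x <= 1 -> is_equilibrium a b c d mu u x 1 ->
          x <> xs -> 0 < x /\ x < 1 / 2].
Proof.
have A_gt0 : 0 < u - (c + d) / 2 by rewrite subr_gt0.
set g := centred_cubic (u - (c + d) / 2) (d - c) mu.
have top_equilibrium x : is_equilibrium a b c d mu u x 1 <-> g (x - 1/2) = 0.
  by rewrite /is_equilibrium xdot_top_side /rdot subrr mulr0 mul0r; split=> [[]|].
have [s /andP[s_gt0 s_lt] gs0] := centred_cubic_exists_root (d - c) A_gt0 hmu0.
exists (s + 1/2); split; [lra | lra | by apply/top_equilibrium; rewrite addrK |].
move=> x x_ge0 x_le1 /top_equilibrium gx0 x_neq.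
have [x_lt|x_ge] := ltP x (1/2).
  split=> //; rewrite lt_def x_ge0 andbT; apply: contra_eq_neq gx0 => ->.
  by rewrite /g add0r centred_cubic_Nhalf gt_eqF.
have x_ge' : 0 <= x - 1/2 by rewrite subr_ge0.
have x_le : x - 1/2 <= 1/2 by lra.
have /andP[x_gt x_lt] := centred_cubic_root_gt0 A_gt0 hmu0 x_ge' x_le gx0.
have := centred_cubic_root_unique A_gt0 hmu0 x_gt x_lt s_gt0 s_lt gx0 gs0.
lra.
Qed.
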